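(* Let $b,n$ be positive integers, $c$ a nonnegative integer, and $a_2,\dots,a_n$ integers. With $\mathbf a=(0,0,a_2,\dots,a_n,-\sum_{j=2}^n a_j)$ and $\tilde{\mathbf a}=(0,a_2,\dots,a_n,-\sum_{j=2}^n a_j)$, $$K_{k^{1,b,c}_{n+2}}(\mathbf a)=K_{k^{c+1,b,c}_{n+1}}(\tilde{\mathbf a}).$$
   Context: For a positive integer $m$ and nonnegative integers $a,b,c$, $k_{m+2}^{a,b,c}$ is the directed multigraph on vertex set $\{0,1,\dots,m+1\}$ with edge $(0,i)$ of multiplicity $a$ and edge $(i,m+1)$ of multiplicity $b$ for each $i\in[m]$, and edge $(i,j)$ of multiplicity $c$ for $1\le i<j\le m$; edges $(i,j)$ are oriented $i\to j$. For such a graph $G$ on $\{0,\dots,m+1\}$ and a vector $\mathbf v=(v_0,\dots,v_{m+1})$ with $\sum v_i=0$, $K_G(\mathbf v)$ is the number of $f\in\mathbb Z_{\ge0}^{E(G)}$ such that the net flow (outgoing minus incoming) at each vertex $u$ equals $v_u$. (Here $k^{1,b,c}_{n+2}$ has vertices $0,\dots,n+1$ and $k^{c+1,b,c}_{n+1}$ has vertices $0,\dots,n$.) *)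

From HB Require Import structures.
From mathcomp Require Import all_boot all_order all_algebra.
Set Implicit Arguments. Unset Strict Implicit. Unset Printing Implicit Defensive.
Import Order.TTheory GRing.Theory Num.Theory.
Local Open Scope ring_scope.

Record mgraph := MGraph { nv : nat; mult : 'I_nv -> 'I_nv -> nat }.

Definition edge (G : mgraph) : finType :=
  {x : 'I_(nv G) * 'I_(nv G) & 'I_(mult x.1 x.2)}.

Definition esrc G (e : edge G) : 'I_(nv G) := (tag e).1.
Definition etgt G (e : edge G) : 'I_(nv G) := (tag e).2.

Definition netflow G (f : {ffun edge G -> nat}) (u : 'I_(nv G)) : int :=
  \sum_(e : edge G | esrc e == u) (f e)%:Z - \sum_(e : edge G | etgt e == u) (f e)%:Z.

Definition is_flow G (v : 'I_(nv G) -> int) (f : {ffun edge G -> nat}) : Prop :=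
  forall u, netflow f u = v u.

Definition has_count (T : Type) (P : T -> Prop) (n : nat) : Prop :=
  exists h : 'I_n -> T, injective h /\ (forall x, P x <-> exists i, h i = x).

Definition K_eq (G : mgraph) (v : 'I_(nv G) -> int) (n : nat) : Prop :=
  has_count (is_flow v) n.

Definition kmult (m a b c : nat) (i j : 'I_m.+2) : nat :=
  if ((val i == 0)%N && (1 <= val j <= m)%N) then a
  else if ((1 <= val i <= m)%N && (val j == m.+1)%N) then b
  else if ((1 <= val i)%N && (val i < val j)%N && (val j <= m)%N) then c
  else 0%N.

Definition kgraph (m a b c : nat) : mgraph := @MGraph m.+2 (@kmult m a b c).

Definition vec_of (G : mgraph) (w : nat -> int) : 'I_(nv G) -> int :=
  fun i => w (val i).

From Pilot Require Import Defs.
From HB Require Import structures.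
From mathcomp Require Import all_boot all_order all_algebra zify.
Set Implicit Arguments. Unset Strict Implicit. Unset Printing Implicit Defensive.
Import Order.TTheory GRing.Theory Num.Theory.
Local Open Scope ring_scope.

(* Edges of k^{a,b,c} go from smaller to larger vertices, so a vertex with net
   flow 0 whose incoming edges carry nothing has empty outgoing edges as well.
   For the vector a this empties every edge leaving vertices 0 and 1 of
   k^{1,b,c}_{n+2}; for a~ it empties every edge leaving vertex 0 of
   k^{c+1,b,c}_{n+1}.  After shifting vertices by one, the remaining edges of the
   two graphs coincide with their multiplicities, so flows correspond bijectively.
   Both counts are finite because sum_u u v_u = - sum_e (tgt e - src e) f e
   bounds every f e. *)

Lemma Posz_sum (I : finType) (P : pred I) (F : I -> nat) :
  (\sum_(i | P i) F i)%N%:Z = \sum_(i | P i) (F i)%:Z.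
Proof. exact: (big_morph Posz PoszD). Qed.

Section EdgeFlows.
Variable G : mgraph.
Implicit Types (f : {ffun edge G -> nat}) (i j u : 'I_(nv G)).

Definition edge_of i j (k : 'I_(mult i j)) : edge G :=
  existT (fun x : 'I_(nv G) * 'I_(nv G) => 'I_(mult x.1 x.2)) (i, j) k.

(* Flow on the k-th parallel copy of i -> j, read as 0 past the multiplicity;
   this lets flows on graphs with different edge types be compared. *)
Definition flow_at f i j (k : nat) : nat :=
  if insub k : option 'I_(mult i j) is Some k' then f (edge_of k') else 0%N.

Lemma flow_atE f i j k (lt_k : (k < mult i j)%N) :
  flow_at f i j k = f (edge_of (Ordinal lt_k)).
Proof. by rewrite /flow_at insubT. Qed.

Lemma flow_at_ge f i j k : (mult i j <= k)%N -> flow_at f i j k = 0%N.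
Proof. by move=> ge_k; rewrite /flow_at insubF // ltnNge ge_k. Qed.

Lemma flow_at_tagged f (e : edge G) : flow_at f (esrc e) (etgt e) (tagged e) = f e.
Proof. by case: e => [[i j] k]; rewrite /flow_at /esrc /etgt /= valK. Qed.

Lemma mult_edge_gt0 (e : edge G) : (0 < mult (esrc e) (etgt e))%N.
Proof. by case: e => [[i j] [k lt_k]]; apply: leq_ltn_trans lt_k. Qed.

Lemma flow_at_eq0 f i j k :
  (forall e : edge G, esrc e = i -> f e = 0%N) -> flow_at f i j k = 0%N.
Proof.
move=> f0; case: (ltnP k (mult i j)) => [lt_k|]; last exact: flow_at_ge.
by rewrite (flow_atE f lt_k); apply: f0.
Qed.

Lemma sum_edges_flow_at (P : pred ('I_(nv G) * 'I_(nv G))) f :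
  (\sum_(e : edge G | P (tag e)) f e
   = \sum_(x | P x) \sum_(0 <= k < mult x.1 x.2) flow_at f x.1 x.2 k)%N.
Proof.
transitivity (\sum_(x | P x) \sum_(k < mult x.1 x.2) f (edge_of k))%N.
  rewrite (sig_big_dep P (fun _ _ => true) (fun x k => f (edge_of k))) /=.
  by apply: eq_big => [[[i j] k]|[[i j] k]] //=; rewrite andbT.
apply: eq_bigr => [[i j]] _; rewrite big_mkord; apply: eq_bigr => k _.
by rewrite (flow_atE f (ltn_ord k)); congr (f (edge_of _)); apply: val_inj.
Qed.

Definition outflow f u := (\sum_(e : edge G | esrc e == u) f e)%N.
Definition inflow f u := (\sum_(e : edge G | etgt e == u) f e)%N.

Lemma netflowE f u : netflow f u = (outflow f u)%:Z - (inflow f u)%:Z.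
Proof. by rewrite /netflow !Posz_sum. Qed.

Lemma outflowE f u :
  outflow f u = (\sum_(j < nv G) \sum_(0 <= k < mult u j) flow_at f u j k)%N.
Proof.
rewrite /outflow (sum_edges_flow_at (fun x => x.1 == u)).
rewrite (eq_bigl (fun x => (x.1 == u) && true)) => [|x]; last by rewrite andbT.
rewrite -(pair_big_dep (pred1 u) (fun _ _ => true)
  (fun i j => \sum_(0 <= k < mult i j) flow_at f i j k)%N).
by rewrite big_pred1_eq.
Qed.

Lemma inflowE f u :
  inflow f u = (\sum_(i < nv G) \sum_(0 <= k < mult i u) flow_at f i u k)%N.
Proof.
rewrite /inflow (sum_edges_flow_at (fun x => x.2 == u)).
rewrite -(pair_big_dep xpredT (fun _ => pred1 u)
  (fun i j => \sum_(0 <= k < mult i j) flow_at f i j k)%N).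
by apply: eq_bigr => i _; rewrite big_pred1_eq.
Qed.

Lemma out_edges_eq0 (v : 'I_(nv G) -> int) f u :
  is_flow v f -> v u = 0 -> (forall e : edge G, etgt e = u -> f e = 0%N) ->
  forall e : edge G, esrc e = u -> f e = 0%N.
Proof.
move=> flow_f vu0 in0 e Eu; subst u.
have inflow0 : inflow f (esrc e) = 0%N by rewrite /inflow big1 // => e' /eqP /in0.
have [/eqP] : Posz (outflow f (esrc e)) = Posz 0.
  by have := flow_f (esrc e); rewrite netflowE vu0 inflow0 subr0.
by rewrite /outflow sum_nat_eq0 => /forallP /(_ e); rewrite eqxx => /eqP.
Qed.

Lemma sum_weighted_partition (w : 'I_(nv G) -> nat) (h : edge G -> 'I_(nv G)) f :
  (\sum_(u < nv G) w u * \sum_(e : edge G | h e == u) f e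
   = \sum_(e : edge G) w (h e) * f e)%N.
Proof.
rewrite (partition_big h xpredT) //=; apply: eq_bigr => u _.
by rewrite big_distrr; apply: eq_bigr => e /eqP ->.
Qed.

End EdgeFlows.

Section UpwardGraph.
Variable G : mgraph.
Hypothesis mult_gt0_lt : forall i j : 'I_(nv G), (0 < mult i j)%N -> (i < j)%N.
Implicit Types (f : {ffun edge G -> nat}) (v : 'I_(nv G) -> int).

Lemma edge_lt (e : edge G) : (esrc e < etgt e)%N.
Proof. exact/mult_gt0_lt/mult_edge_gt0. Qed.

Lemma potential_flow v f : is_flow v f ->
  \sum_(u < nv G) (u : nat)%:Z * v u
  = - (\sum_(e : edge G) (etgt e - esrc e) * f e)%N%:Z.
Proof.
move=> flow_f.
have tgt_src : (\sum_(e : edge G) etgt e * f e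
    = \sum_(e : edge G) esrc e * f e + \sum_(e : edge G) (etgt e - esrc e) * f e)%N.
  by rewrite -big_split; apply: eq_bigr => e _; rewrite /= -mulnDl subnKC // ltnW ?edge_lt.
transitivity (\sum_(u < nv G) ((u * outflow f u)%N%:Z - (u * inflow f u)%N%:Z)).
  by apply: eq_bigr => u _; rewrite -flow_f netflowE mulrBr !PoszM.
rewrite sumrB -!Posz_sum /outflow /inflow.
rewrite !(sum_weighted_partition (fun u => nat_of_ord u)).
by rewrite tgt_src PoszD opprD addrA subrr add0r.
Qed.

Lemma flow_le_potential v f (e : edge G) : is_flow v f ->
  (f e <= absz (\sum_(u < nv G) (u : nat)%:Z * v u)%R)%N.
Proof.
move=> /potential_flow ->; rewrite abszN absz_nat (bigD1 e) //=.
by apply: leq_trans (leq_addr _ _); rewrite leq_pmull // subn_gt0 edge_lt.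
Qed.

Lemma netflow_eq0_below f (u : 'I_(nv G)) :
  (forall e : edge G, (esrc e <= u)%N -> f e = 0%N) -> netflow f u = 0.
Proof.
move=> f0; rewrite netflowE /outflow /inflow !big1 // => e /eqP Eu; apply: f0.
all: by rewrite -Eu // ltnW ?edge_lt.
Qed.

Lemma flow_count_exists v : exists K, K_eq v K.
Proof.
set B := absz (\sum_(u < nv G) (u : nat)%:Z * v u)%R.
pose T := {ffun edge G -> 'I_B.+1}.
pose val_ffun (t : T) : {ffun edge G -> nat} := [ffun e => val (t e)].
pose A := [set t : T | [forall u, netflow (val_ffun t) u == v u]].
exists #|A|, (fun i => val_ffun (enum_val i)); split.
  move=> i j /ffunP eq_ij; apply/enum_val_inj/ffunP => e; apply: val_inj.
  by have := eq_ij e; rewrite !ffunE.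
move=> f; split => [flow_f|[i <-] u]; last first.
  by have := enum_valP i; rewrite inE => /forallP /(_ u) /eqP.
pose t : T := [ffun e => inord (f e)].
have val_t : val_ffun t = f.
  by apply/ffunP => e; rewrite !ffunE; apply: inordK; rewrite ltnS flow_le_potential.
have At : t \in A by rewrite inE val_t; apply/forallP => u; apply/eqP.
by exists (enum_rank_in At t); rewrite enum_rankK_in.
Qed.

End UpwardGraph.

Lemma has_count_bij (A B : Type) (P : A -> Prop) (Q : B -> Prop)
    (phi : A -> B) (psi : B -> A) (K : nat) :
  (forall x, P x -> Q (phi x)) -> (forall y, Q y -> P (psi y)) ->
  (forall x, P x -> psi (phi x) = x) -> (forall y, Q y -> phi (psi y) = y) ->
  Defs.has_count P K -> Defs.has_count Q K.
Proof.
move=> PQ QP phiK psiK [h [h_inj h_onto]].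
have P_h i : P (h i) by apply/h_onto; exists i.
exists (phi \o h); split.
  by move=> i j /= /(congr1 psi); rewrite !phiK //; apply: h_inj.
move=> y; split => [Qy|[i <-]]; last exact/PQ/P_h.
by have /h_onto [i hi] := QP _ Qy; exists i; rewrite /= hi psiK.
Qed.

Lemma kmult_gt0_lt m a b c (i j : 'I_m.+2) : (0 < @kmult m a b c i j)%N -> (i < j)%N.
Proof. by case: i j => [i ?] [j ?]; rewrite /kmult /=; do ![case: ifP] => //; lia. Qed.

Lemma kmult_lift m a a' b c (u j : 'I_m.+2) : (0 < u)%N ->
  @kmult m.+1 a b c (lift ord0 u) (lift ord0 j) = @kmult m a' b c u j.
Proof.
case: u j => [u ?] [j ?] /= u_gt0; rewrite /kmult /= /bump /= !add1n.
by do ![case: ifP] => //; lia.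
Qed.

Section DropSourceVertex.
Variables n b c : nat.
Local Notation G1 := (kgraph n.+1 1 b c).
Local Notation G2 := (kgraph n c.+1 b c).

Let upward1 : forall i j : 'I_(nv G1), (0 < mult i j)%N -> (i < j)%N :=
  @kmult_gt0_lt _ _ _ _.
Let upward2 : forall i j : 'I_(nv G2), (0 < mult i j)%N -> (i < j)%N :=
  @kmult_gt0_lt _ _ _ _.

Definition lower (i : 'I_n.+3) : 'I_n.+2 := inord i.-1.

Lemma lowerK : cancel (lift ord0) lower.
Proof. by move=> u; apply: val_inj; rewrite /lower /= add0n inordK. Qed.

Lemma lift_lower (i : 'I_n.+3) : (0 < i)%N -> lift ord0 (lower i) = i.
Proof.
move=> i_gt0; apply: val_inj; rewrite /= /bump /= /lower inordK; first lia.
by have := ltn_ord i; lia.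
Qed.

Lemma lower_gt0 (i : 'I_n.+3) : (1 < i)%N -> (0 < lower i)%N.
Proof. by move=> i_gt1; rewrite /lower inordK; have := ltn_ord i; lia. Qed.

Lemma lift0_gt1 (u : 'I_n.+2) : (0 < u)%N -> (1 < lift ord0 u)%N.
Proof. by rewrite /= /bump /=; lia. Qed.

Definition restrict_flow (f1 : {ffun edge G1 -> nat}) : {ffun edge G2 -> nat} :=
  [ffun e : edge G2 => if (0 < esrc e)%N then
     flow_at f1 (lift ord0 (esrc e)) (lift ord0 (etgt e)) (tagged e) else 0%N].

Definition extend_flow (f2 : {ffun edge G2 -> nat}) : {ffun edge G1 -> nat} :=
  [ffun e : edge G1 => if (1 < esrc e)%N then
     flow_at f2 (lower (esrc e)) (lower (etgt e)) (tagged e) else 0%N].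

Lemma flow_at_restrict (f1 : {ffun edge G1 -> nat}) (u j : 'I_n.+2) k :
  (0 < u)%N -> (k < @mult G2 u j)%N ->
  flow_at (restrict_flow f1) u j k = flow_at f1 (lift ord0 u) (lift ord0 j) k.
Proof. by move=> u_gt0 lt_k; rewrite (flow_atE _ lt_k) ffunE /esrc /etgt /= u_gt0. Qed.

Lemma flow_at_extend (f2 : {ffun edge G2 -> nat}) (u j : 'I_n.+2) k :
  (0 < u)%N -> (k < @mult G2 u j)%N ->
  flow_at f2 u j k = flow_at (extend_flow f2) (lift ord0 u) (lift ord0 j) k.
Proof.
move=> u_gt0 lt_k; have lt_k1 : (k < @mult G1 (lift ord0 u) (lift ord0 j))%N.
  by rewrite /= (kmult_lift _ c.+1).
by rewrite (flow_atE _ lt_k1) ffunE /esrc /etgt /= lift0_gt1 // !lowerK.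
Qed.

Lemma flow1_low_eq0 (v1 : 'I_n.+3 -> int) (f1 : {ffun edge G1 -> nat}) :
  @is_flow G1 v1 f1 -> (forall u : 'I_n.+3, (u <= 1)%N -> v1 u = 0) ->
  forall e : edge G1, (esrc e <= 1)%N -> f1 e = 0%N.
Proof.
move=> flow_f1 v1_low.
have out0 : forall e : edge G1, esrc e = ord0 -> f1 e = 0%N.
  apply: (out_edges_eq0 flow_f1 (v1_low ord0 isT)) => e tgt0.
  by have := edge_lt upward1 e; rewrite tgt0.
have out1 : forall e : edge G1, esrc e = inord 1 -> f1 e = 0%N.
  apply: (out_edges_eq0 flow_f1 (v1_low (inord 1) _)) => [|e tgt1]; first by rewrite inordK.
  apply: out0; apply: val_inj; have := edge_lt upward1 e.
  by rewrite tgt1 inordK //=; lia.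
move=> e; rewrite leq_eqVlt ltnS leqn0 => /orP[] /eqP src_e.
  by apply/out1/val_inj; rewrite /= src_e inordK.
exact/out0/val_inj.
Qed.

Lemma flow2_source_eq0 (v2 : 'I_n.+2 -> int) (f2 : {ffun edge G2 -> nat}) :
  @is_flow G2 v2 f2 -> v2 ord0 = 0 -> forall e : edge G2, esrc e = ord0 -> f2 e = 0%N.
Proof.
move=> flow_f2 v2_0; apply: (out_edges_eq0 flow_f2 v2_0) => e tgt0.
by have := edge_lt upward2 e; rewrite tgt0.
Qed.

Section FlowCorrespondence.
Variables (f1 : {ffun edge G1 -> nat}) (f2 : {ffun edge G2 -> nat}).
Hypothesis f1_low : forall e : edge G1, (esrc e <= 1)%N -> f1 e = 0%N.
Hypothesis f2_source : forall e : edge G2, esrc e = ord0 -> f2 e = 0%N.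
Hypothesis f1_f2 : forall (u j : 'I_n.+2) k, (0 < u)%N -> (k < @mult G2 u j)%N ->
  flow_at f2 u j k = flow_at f1 (lift ord0 u) (lift ord0 j) k.

Lemma sum_flow_at_lift (u j : 'I_n.+2) : (0 < u)%N ->
  (\sum_(0 <= k < @mult G2 u j) flow_at f2 u j k
   = \sum_(0 <= k < @mult G1 (lift ord0 u) (lift ord0 j))
       flow_at f1 (lift ord0 u) (lift ord0 j) k)%N.
Proof.
move=> u_gt0; rewrite /= (kmult_lift _ c.+1) //.
by apply: eq_big_nat => k /andP[_ lt_k]; rewrite f1_f2.
Qed.

Lemma outflow_lift (u : 'I_n.+2) : (0 < u)%N -> outflow f2 u = outflow f1 (lift ord0 u).
Proof.
move=> u_gt0; rewrite !outflowE [RHS]big_ord_recl big_geq ?add0n; last first.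
  by rewrite leqNgt; apply/negP => /upward1.
by apply: eq_bigr => j _; rewrite sum_flow_at_lift.
Qed.

Lemma inflow_lift (u : 'I_n.+2) : (0 < u)%N -> inflow f2 u = inflow f1 (lift ord0 u).
Proof.
move=> u_gt0; rewrite !inflowE [RHS]big_ord_recl [X in (_ = X + _)%N]big1 => [|k _].
  rewrite add0n; apply: eq_bigr => i _.
  have [i_gt0|] := ltnP 0 i; first exact: sum_flow_at_lift.
  rewrite leqn0 => /eqP i0; rewrite !big1 // => k _; apply: flow_at_eq0 => e src_e.
    by apply/f1_low; rewrite src_e /= /bump /= i0.
  by apply/f2_source/val_inj; rewrite src_e.
by apply: flow_at_eq0 => e src_e; apply: f1_low; rewrite src_e.
Qed.

Lemma is_flow_lift_iff (v1 : 'I_n.+3 -> int) (v2 : 'I_n.+2 -> int) :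
  (forall u : 'I_n.+3, (u <= 1)%N -> v1 u = 0) -> v2 ord0 = 0 ->
  (forall u : 'I_n.+2, (0 < u)%N -> v1 (lift ord0 u) = v2 u) ->
  @is_flow G1 v1 f1 <-> @is_flow G2 v2 f2.
Proof.
move=> v1_low v2_0 v1_v2; split=> flow_f u.
  have [u_gt0|] := ltnP 0 u.
    by rewrite -v1_v2 // -flow_f !netflowE outflow_lift // inflow_lift.
  rewrite leqn0 => /eqP u0; have -> : u = ord0 by apply: val_inj.
  rewrite v2_0; apply: (netflow_eq0_below upward2) => e.
  by rewrite leqn0 => /eqP src0; apply/f2_source/val_inj.
have [u_gt1|u_le1] := ltnP 1 u; last first.
  rewrite v1_low //; apply: (netflow_eq0_below upward1) => e le_u.
  exact/f1_low/(leq_trans le_u).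
have lower_u_gt0 := lower_gt0 u_gt1.
rewrite -(lift_lower (ltnW u_gt1)) v1_v2 // -flow_f !netflowE.
by rewrite outflow_lift // inflow_lift.
Qed.

End FlowCorrespondence.

Lemma extend_restrict_flow (f1 : {ffun edge G1 -> nat}) :
  (forall e : edge G1, (esrc e <= 1)%N -> f1 e = 0%N) ->
  extend_flow (restrict_flow f1) = f1.
Proof.
move=> f1_low; apply/ffunP => -[[i j] k]; rewrite ffunE /esrc /etgt /=.
case: ifP => [i_gt1|/negbT]; last by rewrite -ltnNge ltnS => i_le1; rewrite f1_low.
have i_lt_j : (i < j)%N by apply/upward1/(leq_ltn_trans (leq0n k)).
have i_gt0 := ltnW i_gt1; have j_gt0 := ltn_trans i_gt0 i_lt_j.
have mult_lower : @mult G2 (lower i) (lower j) = @mult G1 i j.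
  by rewrite /= -(kmult_lift 1) ?lower_gt0 // !lift_lower.
have lt_k : (k < @mult G2 (lower i) (lower j))%N by rewrite mult_lower.
rewrite (flow_at_restrict _ (lower_gt0 i_gt1) lt_k) !lift_lower //.
exact: (flow_at_tagged f1 (existT _ (i, j) k)).
Qed.

Lemma restrict_extend_flow (f2 : {ffun edge G2 -> nat}) :
  (forall e : edge G2, esrc e = ord0 -> f2 e = 0%N) ->
  restrict_flow (extend_flow f2) = f2.
Proof.
move=> f2_source; apply/ffunP => -[[u j] k]; rewrite ffunE /esrc /etgt /=.
case: ifP => [u_gt0|/negbT]; last first.
  by rewrite -ltnNge ltnS leqn0 => /eqP u0; rewrite f2_source //; apply: val_inj.
rewrite -(flow_at_extend _ u_gt0 (ltn_ord k)).
exact: (flow_at_tagged f2 (existT _ (u, j) k)).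
Qed.

Lemma K_eq_drop_source (v1 : 'I_n.+3 -> int) (v2 : 'I_n.+2 -> int) (K : nat) :
  (forall u : 'I_n.+3, (u <= 1)%N -> v1 u = 0) -> v2 ord0 = 0 ->
  (forall u : 'I_n.+2, (0 < u)%N -> v1 (lift ord0 u) = v2 u) ->
  @K_eq G1 v1 K -> @K_eq G2 v2 K.
Proof.
move=> v1_low v2_0 v1_v2.
have low_eq0 f1 := @flow1_low_eq0 v1 f1 ^~ v1_low.
have source_eq0 f2 := @flow2_source_eq0 v2 f2 ^~ v2_0.
apply: (has_count_bij (phi := restrict_flow) (psi := extend_flow)).
- move=> f1 /[dup] /low_eq0 f1_low.
  apply: (is_flow_lift_iff f1_low _ _ v1_low v2_0 v1_v2).1 => [e src0|u j k u_gt0 lt_k].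
    by rewrite ffunE src0.
  by rewrite flow_at_restrict.
- move=> f2 /[dup] /source_eq0 f2_source.
  apply: (is_flow_lift_iff _ f2_source _ v1_low v2_0 v1_v2).2 => [e src_le1|].
    by rewrite ffunE ltnNge src_le1.
  exact: flow_at_extend.
- by move=> f1 /low_eq0 /extend_restrict_flow.
- by move=> f2 /source_eq0 /restrict_extend_flow.
Qed.

End DropSourceVertex.

Theorem proposition5p6 (b n c : nat) (a : nat -> int) :
  (0 < b)%N -> (0 < n)%N ->
  let S : int := \sum_(2 <= j < n.+1) a j in
  (* a = (0, 0, a_2, ..., a_n, -S), indices 0..n+1 *)
  let va := fun k : nat =>
    if (k <= 1)%N then 0 else if (k <= n)%N then a k else - S in
  (* a~ = (0, a_2, ..., a_n, -S), indices 0..n *)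
  let vt := fun k : nat =>
    if (k == 0)%N then 0 else if (k < n)%N then a k.+1 else - S in
  exists K : nat,
    K_eq (@vec_of (kgraph n 1 b c) va) K /\
    K_eq (@vec_of (kgraph n.-1 c.+1 b c) vt) K.
Proof.
move=> _; case: n => [//|n] _ S va vt.
have [K count_va] :=
  @flow_count_exists (kgraph n.+1 1 b c) (@kmult_gt0_lt _ _ _ _) (vec_of va).
exists K; split; first exact: count_va.
apply: (K_eq_drop_source _ _ _ count_va) => //.
- by move=> u u_le1; rewrite /vec_of /va u_le1.
- move=> u u_gt0; rewrite /vec_of /va /vt /= /bump /= add1n ltnS leqn0.
  by rewrite eqn0Ngt u_gt0.
Qed.
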